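(* In the calculus $\mathcal{L}$ described in the context, a well-typed command $c$ (i.e. $c:A$ for some type $A$) reduces (there is $c'$ with $c\rightsquigarrow c'$) if and only if $c$ is not of the form $\langle v_t\mid\star\mid l\rangle^\varepsilon$ with $v_t$ a final value. The same holds in the ordered fragment, i.e. when all judgements $\vdash_p$ are required to be derived without the rule (struct).
   Context: Polarities are $\varepsilon\in\{+,-\}$. Types: positive $P,Q ::= R \mid 1 \mid A\otimes B \mid A\oplus B$; negative $N,M ::= A\multimap B \mid A\,\&\,B$; $\varpi(P)=+$, $\varpi(N)=-$ ($R$ is an atomic type of resources). Fix variables and resource constants $r_n$ ($n\in\mathbb N$). Expressions $t,u$ and values $v,w$: $t,u ::= v \mid (\mathrm{let}\ x^+=t\ \mathrm{in}\ u)^+ \mid (\mathrm{let}\ x^-=v\ \mathrm{in}\ u)^+ \mid \delta(v,(x,y).t)^+ \mid \delta(v,().t)^+ \mid \delta(v,x.t,y.u)^+ \mid (v\,w)^+ \mid (\pi_1 v)^+ \mid (\pi_2 v)^+$; $v,w ::= (\mathrm{let}\ x^+=t\ \mathrm{in}\ v)^- \mid (\mathrm{let}\ x^-=v\ \mathrm{in}\ w)^- \mid \delta(v,(x,y).w)^- \mid \delta(v,().w)^- \mid \delta(v,x.w,y.w')^- \mid (v\,w)^- \mid (\pi_1 v)^- \mid (\pi_2 v)^- \mid x \mid \mathrm{new} \mid \mathrm{delete} \mid (v,w) \mid () \mid \iota_1 v \mid \iota_2 v \mid \lambda x.t \mid \langle t,u\rangle \mid r_n$. Final values are $v_t ::=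 () \mid (v,w)\mid \iota_i v\mid r_n\mid\langle t,u\rangle\mid\lambda x.t\mid\mathrm{new}\mid\mathrm{delete}$. $t[v/x]$ is capture-avoiding substitution. Contexts are finite lists of typed variables. Typing rules ($v,w$ range over values): (var) $x:A\vdash x:A$. (struct) from $\Gamma\vdash t:A$ and a type-preserving bijection $\sigma$ from entries of $\Gamma$ to entries of $\Gamma'$ (permutation plus renaming) derive $\Gamma'\vdash t[\sigma]:A$. $\vdash\mathrm{new}:1\multimap(R\oplus 1)$; $\vdash\mathrm{delete}:R\multimap 1$. (let) from $\Delta\vdash t:A$, $\Gamma,x:A\vdash u:B$ derive $\Gamma,\Delta\vdash(\mathrm{let}\ x^{\varpi(A)}=t\ \mathrm{in}\ u)^{\varpi(B)}:B$. From $\Gamma\vdash v:A$, $\Delta\vdash w:B$ derive $\Gamma,\Delta\vdash(v,w):A\otimes B$; from $\Delta\vdash v:A\otimes B$, $\Gamma,x:A,y:B,\Gamma'\vdash t:C$ derive $\Gamma,\Delta,\Gamma'\vdash\delta(v,(x,y).t)^{\varpi(C)}:C$. $\vdash():1$; from $\Delta\vdash v:1$, $\Gamma,\Gamma'\vdash t:A$ derive $\Gamma,\Delta,\Gamma'\vdash\delta(v,().t)^{\varpi(A)}:A$. From $\Gamma\vdash v:A$ derive $\Gamma\vdash\iota_1v:A\oplus B$; from $\Gamma\vdash v:B$ derive $\Gamma\vdash\iota_2v:A\oplus B$; from $\Delta\vdash v:A\oplus B$, $\Gamma,x:A,\Gamma'\vdash t:C$, $\Gamma,y:B,\Gamma'\vdash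 u:C$ derive $\Gamma,\Delta,\Gamma'\vdash\delta(v,x.t,y.u)^{\varpi(C)}:C$. From $x:A,\Gamma\vdash t:B$ derive $\Gamma\vdash\lambda x.t:A\multimap B$; from $\Gamma\vdash w:A$, $\Delta\vdash v:A\multimap B$ derive $\Gamma,\Delta\vdash(v\,w)^{\varpi(B)}:B$. From $\Gamma\vdash t:A$, $\Gamma\vdash u:B$ derive $\Gamma\vdash\langle t,u\rangle:A\&B$; from $\Gamma\vdash v:A_1\&A_2$ derive $\Gamma\vdash(\pi_iv)^{\varpi(A_i)}:A_i$. $\vdash_p$ is generated by these rules plus the axioms $\vdash_p r_n:R$. Machine: stacks $s ::= \star \mid v^\varepsilon\cdot s \mid \pi_i^\varepsilon\cdot s \mid (x^+.u)^\varepsilon\cdot s$; lists $l ::= []\mid r_n::l$; commands $\langle t\mid s\mid l\rangle^\varepsilon$. Stack typing $s:A\vdash_p C$: $\star:A\vdash_p A$; if $s:B\vdash_p C$, $\varepsilon=\varpi(B)$ and $\vdash_p v:A$ then $v^\varepsilon\cdot s:A\multimap B\vdash_p C$; if $s:B\vdash_p C$, $\varepsilon=\varpi(B)$ and $x:A\vdash_p t:B$ then $(x^+.t)^\varepsilon\cdot s:A\vdash_p C$; if $s:A_i\vdash_p C$ and $\varepsilon=\varpi(A_i)$ then $\pi_i^\varepsilon\cdot s:A_1\&A_2\vdash_p C$. A command is typed, $\langle t\mid s\mid l\rangle^\varepsilon:A$, iff there is $B$ with $\varpi(B)=\varepsilon$, $\vdash_p t:B$ and $s:B\vdash_p A$.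 Reduction $\rightsquigarrow$ ($i\in\{1,2\}$): $\langle(\mathrm{let}\ x^-=v\ \mathrm{in}\ t)^\varepsilon\mid s\mid l\rangle^\varepsilon\rightsquigarrow\langle t[v/x]\mid s\mid l\rangle^\varepsilon$; $\langle(\mathrm{let}\ x^+=t\ \mathrm{in}\ u)^\varepsilon\mid s\mid l\rangle^\varepsilon\rightsquigarrow\langle t\mid (x^+.u)^\varepsilon\cdot s\mid l\rangle^+$; $\langle v\mid (x^+.t)^\varepsilon\cdot s\mid l\rangle^+\rightsquigarrow\langle t[v/x]\mid s\mid l\rangle^\varepsilon$; $\langle (v\,w)^\varepsilon\mid s\mid l\rangle^\varepsilon\rightsquigarrow\langle v\mid w^\varepsilon\cdot s\mid l\rangle^-$; $\langle \lambda x.t\mid v^\varepsilon\cdot s\mid l\rangle^-\rightsquigarrow\langle t[v/x]\mid s\mid l\rangle^\varepsilon$; $\langle (\pi_i v)^\varepsilon\mid s\mid l\rangle^\varepsilon\rightsquigarrow\langle v\mid \pi_i^\varepsilon\cdot s\mid l\rangle^-$; $\langle \langle t_1,t_2\rangle\mid \pi_i^\varepsilon\cdot s\mid l\rangle^-\rightsquigarrow\langle t_i\mid s\mid l\rangle^\varepsilon$; $\langle \delta((v,w),(x,y).t)^\varepsilon\mid s\mid l\rangle^\varepsilon\rightsquigarrow\langle t[v/x,w/y]\mid s\mid l\rangle^\varepsilon$; $\langle \delta((),().t)^\varepsilon\mid s\mid l\rangle^\varepsilon\rightsquigarrow\langle t\mid s\mid l\rangle^\varepsilon$; $\langle \delta(\iota_i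 v,x_1.t_1,x_2.t_2)^\varepsilon\mid s\mid l\rangle^\varepsilon\rightsquigarrow\langle t_i[v/x_i]\mid s\mid l\rangle^\varepsilon$; $\langle \mathrm{new}\mid ()^{\varepsilon}\cdot s\mid r_n::l\rangle^-\rightsquigarrow\langle \iota_1 r_n\mid s\mid l\rangle^+$; $\langle \mathrm{new}\mid ()^{\varepsilon}\cdot s\mid []\rangle^-\rightsquigarrow\langle \iota_2 ()\mid s\mid []\rangle^+$; $\langle \mathrm{delete}\mid r_n^{\varepsilon}\cdot s\mid l\rangle^-\rightsquigarrow\langle ()\mid s\mid r_n::l\rangle^+$.
   Formalization: Typing the stack frame $(x^+.t)^\varepsilon\cdot s:A\vdash_p C$ also needs $\varpi(A)=+$, and every typing rule that joins contexts demands that the resulting context list distinct variables. Apart from conventions, each condition added here is assumed in the paper as well or is needed for the statement above to hold. *)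

From Stdlib Require Import List Arith Permutation.
Import ListNotations.

Inductive pol : Type := Pos | Neg.

Inductive ty : Type :=
| TR : ty
| TOne : ty
| TTensor : ty -> ty -> ty
| TPlus : ty -> ty -> ty
| TLolli : ty -> ty -> ty
| TWith : ty -> ty -> ty.

Definition pol_of (A : ty) : pol :=
  match A with
  | TR | TOne | TTensor _ _ | TPlus _ _ => Pos
  | TLolli _ _ | TWith _ _ => Neg
  end.

Inductive side : Type := S1 | S2.
Definition pick {X : Type} (i : side) (a b : X) : X :=
  match i with S1 => a | S2 => b end.

Definition var := nat.

(** * Syntax: expressions (t,u) and values (v,w).
    Constructors annotated ^+ are expressions, ^- are values. *)
Inductive expr : Type :=
| EV : value -> expr
| ELetP : var -> expr -> expr -> expr                  (* (let x^+ = t in u)^+ *)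
| ELetN : var -> value -> expr -> expr                 (* (let x^- = v in u)^+ *)
| EDTens : value -> var -> var -> expr -> expr
| EDUnit : value -> expr -> expr
| EDSum : value -> var -> expr -> var -> expr -> expr
| EApp : value -> value -> expr
| EProj : side -> value -> expr
with value : Type :=
| VLetP : var -> expr -> value -> value                (* (let x^+ = t in v)^- *)
| VLetN : var -> value -> value -> value               (* (let x^- = v in w)^- *)
| VDTens : value -> var -> var -> value -> value
| VDUnit : value -> value -> value
| VDSum : value -> var -> value -> var -> value -> value
| VApp : value -> value -> value
| VProj : side -> value -> value
| VVar : var -> value
| VNew : value
| VDelete : value
| VPair : value -> value -> value
| VUnit : value
| VInj : side -> value -> value
| VLam : var -> expr -> value
| VWith : expr -> expr -> value
| VRes : nat -> value.

Definition is_final_value (v : value) : Prop :=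
  match v with
  | VUnit | VPair _ _ | VInj _ _ | VRes _ | VWith _ _ | VLam _ _
  | VNew | VDelete => True
  | _ => False
  end.

(** * Substitution t[v1/x1, ..., vk/xk] (simultaneous).
    Binders shadow.  In well-typed commands only closed values are
    substituted, so this coincides with capture-avoiding substitution. *)
Definition sub := list (var * value).

Fixpoint lookup (σ : sub) (x : var) : option value :=
  match σ with
  | [] => None
  | (y, v) :: σ' => if Nat.eqb x y then Some v else lookup σ' x
  end.

Definition rm (x : var) (σ : sub) : sub :=
  filter (fun p => negb (Nat.eqb (fst p) x)) σ.

Fixpoint subst_e (σ : sub) (t : expr) : expr :=
  match t with
  | EV v => EV (subst_v σ v)
  | ELetP x t u => ELetP x (subst_e σ t) (subst_e (rm x σ) u)
  | ELetN x v u => ELetN x (subst_v σ v) (subst_e (rm x σ) u)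
  | EDTens v x y t => EDTens (subst_v σ v) x y (subst_e (rm y (rm x σ)) t)
  | EDUnit v t => EDUnit (subst_v σ v) (subst_e σ t)
  | EDSum v x t y u =>
      EDSum (subst_v σ v) x (subst_e (rm x σ) t) y (subst_e (rm y σ) u)
  | EApp v w => EApp (subst_v σ v) (subst_v σ w)
  | EProj i v => EProj i (subst_v σ v)
  end
with subst_v (σ : sub) (v : value) : value :=
  match v with
  | VLetP x t w => VLetP x (subst_e σ t) (subst_v (rm x σ) w)
  | VLetN x v w => VLetN x (subst_v σ v) (subst_v (rm x σ) w)
  | VDTens v x y w => VDTens (subst_v σ v) x y (subst_v (rm y (rm x σ)) w)
  | VDUnit v w => VDUnit (subst_v σ v) (subst_v σ w)
  | VDSum v x w y w' =>
      VDSum (subst_v σ v) x (subst_v (rm x σ) w) y (subst_v (rm y σ) w')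
  | VApp v w => VApp (subst_v σ v) (subst_v σ w)
  | VProj i v => VProj i (subst_v σ v)
  | VVar x => match lookup σ x with Some v => v | None => VVar x end
  | VNew => VNew
  | VDelete => VDelete
  | VPair v w => VPair (subst_v σ v) (subst_v σ w)
  | VUnit => VUnit
  | VInj i v => VInj i (subst_v σ v)
  | VLam x t => VLam x (subst_e (rm x σ) t)
  | VWith t u => VWith (subst_e σ t) (subst_e σ u)
  | VRes n => VRes n
  end.

Definition upd (ρ : var -> var) (x : var) : var -> var :=
  fun z => if Nat.eqb z x then z else ρ z.

Fixpoint rename_e (ρ : var -> var) (t : expr) : expr :=
  match t with
  | EV v => EV (rename_v ρ v)
  | ELetP x t u => ELetP x (rename_e ρ t) (rename_e (upd ρ x) u)
  | ELetN x v u => ELetN x (rename_v ρ v) (rename_e (upd ρ x) u)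
  | EDTens v x y t => EDTens (rename_v ρ v) x y (rename_e (upd (upd ρ x) y) t)
  | EDUnit v t => EDUnit (rename_v ρ v) (rename_e ρ t)
  | EDSum v x t y u =>
      EDSum (rename_v ρ v) x (rename_e (upd ρ x) t) y (rename_e (upd ρ y) u)
  | EApp v w => EApp (rename_v ρ v) (rename_v ρ w)
  | EProj i v => EProj i (rename_v ρ v)
  end
with rename_v (ρ : var -> var) (v : value) : value :=
  match v with
  | VLetP x t w => VLetP x (rename_e ρ t) (rename_v (upd ρ x) w)
  | VLetN x v w => VLetN x (rename_v ρ v) (rename_v (upd ρ x) w)
  | VDTens v x y w => VDTens (rename_v ρ v) x y (rename_v (upd (upd ρ x) y) w)
  | VDUnit v w => VDUnit (rename_v ρ v) (rename_v ρ w)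
  | VDSum v x w y w' =>
      VDSum (rename_v ρ v) x (rename_v (upd ρ x) w) y (rename_v (upd ρ y) w')
  | VApp v w => VApp (rename_v ρ v) (rename_v ρ w)
  | VProj i v => VProj i (rename_v ρ v)
  | VVar x => VVar (ρ x)
  | VNew => VNew
  | VDelete => VDelete
  | VPair v w => VPair (rename_v ρ v) (rename_v ρ w)
  | VUnit => VUnit
  | VInj i v => VInj i (rename_v ρ v)
  | VLam x t => VLam x (rename_e (upd ρ x) t)
  | VWith t u => VWith (rename_e ρ t) (rename_e ρ u)
  | VRes n => VRes n
  end.

(** bound variables (to state that a renaming is capture-free) *)
Fixpoint bv_e (t : expr) : list var :=
  match t with
  | EV v => bv_v v
  | ELetP x t u => x :: bv_e t ++ bv_e u
  | ELetN x v u => x :: bv_v v ++ bv_e u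
  | EDTens v x y t => x :: y :: bv_v v ++ bv_e t
  | EDUnit v t => bv_v v ++ bv_e t
  | EDSum v x t y u => x :: y :: bv_v v ++ bv_e t ++ bv_e u
  | EApp v w => bv_v v ++ bv_v w
  | EProj _ v => bv_v v
  end
with bv_v (v : value) : list var :=
  match v with
  | VLetP x t w => x :: bv_e t ++ bv_v w
  | VLetN x v w => x :: bv_v v ++ bv_v w
  | VDTens v x y w => x :: y :: bv_v v ++ bv_v w
  | VDUnit v w => bv_v v ++ bv_v w
  | VDSum v x w y w' => x :: y :: bv_v v ++ bv_v w ++ bv_v w'
  | VApp v w => bv_v v ++ bv_v w
  | VProj _ v => bv_v v
  | VVar _ | VNew | VDelete | VUnit | VRes _ => []
  | VPair v w => bv_v v ++ bv_v w
  | VInj _ v => bv_v v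
  | VLam x t => x :: bv_e t
  | VWith t u => bv_e t ++ bv_e u
  end.

Definition ctx := list (var * ty).
Definition ctx_ok (Γ : ctx) : Prop := NoDup (map fst Γ).
Definition rn_ctx (ρ : var -> var) (Γ : ctx) : ctx :=
  map (fun p => (ρ (fst p), snd p)) Γ.

(** When [st = true] the rule
    (struct) is available; when [st = false] we get the ordered fragment.
    Rules whose conclusion annotation is ϖ(B) are split according to ϖ(B)
    (expression for +, value for -), and the (let) rule also according to
    ϖ(A) (binder x^+ with an expression, or x^- with a value). *)
Inductive typ (st : bool) : ctx -> expr -> ty -> Prop :=
| T_var x A : typ st [(x, A)] (EV (VVar x)) A
| T_struct Γ Γ' t A (ρ : var -> var) :
    st = true ->
    typ st Γ t A ->
    Permutation (rn_ctx ρ Γ) Γ' -> ctx_ok Γ' ->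
    (forall x, In x (map fst Γ) -> ~ In (ρ x) (bv_e t)) ->
    typ st Γ' (rename_e ρ t) A
| T_new : typ st [] (EV VNew) (TLolli TOne (TPlus TR TOne))
| T_delete : typ st [] (EV VDelete) (TLolli TR TOne)
| T_res n : typ st [] (EV (VRes n)) TR
| T_let_pp Γ Δ x t u A B :
    pol_of A = Pos -> pol_of B = Pos ->
    typ st Δ t A -> typ st (Γ ++ [(x, A)]) u B -> ctx_ok (Γ ++ Δ) ->
    typ st (Γ ++ Δ) (ELetP x t u) B
| T_let_pn Γ Δ x t w A B :
    pol_of A = Pos -> pol_of B = Neg ->
    typ st Δ t A -> typ st (Γ ++ [(x, A)]) (EV w) B -> ctx_ok (Γ ++ Δ) ->
    typ st (Γ ++ Δ) (EV (VLetP x t w)) B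
| T_let_np Γ Δ x v u A B :
    pol_of A = Neg -> pol_of B = Pos ->
    typ st Δ (EV v) A -> typ st (Γ ++ [(x, A)]) u B -> ctx_ok (Γ ++ Δ) ->
    typ st (Γ ++ Δ) (ELetN x v u) B
| T_let_nn Γ Δ x v w A B :
    pol_of A = Neg -> pol_of B = Neg ->
    typ st Δ (EV v) A -> typ st (Γ ++ [(x, A)]) (EV w) B -> ctx_ok (Γ ++ Δ) ->
    typ st (Γ ++ Δ) (EV (VLetN x v w)) B
| T_pair Γ Δ v w A B :
    typ st Γ (EV v) A -> typ st Δ (EV w) B -> ctx_ok (Γ ++ Δ) ->
    typ st (Γ ++ Δ) (EV (VPair v w)) (TTensor A B)
| T_dtens_p Γ Δ Γ' v x y t A B C :
    pol_of C = Pos ->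
    typ st Δ (EV v) (TTensor A B) ->
    typ st (Γ ++ (x, A) :: (y, B) :: Γ') t C -> ctx_ok (Γ ++ Δ ++ Γ') ->
    typ st (Γ ++ Δ ++ Γ') (EDTens v x y t) C
| T_dtens_n Γ Δ Γ' v x y w A B C :
    pol_of C = Neg ->
    typ st Δ (EV v) (TTensor A B) ->
    typ st (Γ ++ (x, A) :: (y, B) :: Γ') (EV w) C -> ctx_ok (Γ ++ Δ ++ Γ') ->
    typ st (Γ ++ Δ ++ Γ') (EV (VDTens v x y w)) C
| T_unit : typ st [] (EV VUnit) TOne
| T_dunit_p Γ Δ Γ' v t A :
    pol_of A = Pos ->
    typ st Δ (EV v) TOne -> typ st (Γ ++ Γ') t A -> ctx_ok (Γ ++ Δ ++ Γ') ->
    typ st (Γ ++ Δ ++ Γ') (EDUnit v t) A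
| T_dunit_n Γ Δ Γ' v w A :
    pol_of A = Neg ->
    typ st Δ (EV v) TOne -> typ st (Γ ++ Γ') (EV w) A -> ctx_ok (Γ ++ Δ ++ Γ') ->
    typ st (Γ ++ Δ ++ Γ') (EV (VDUnit v w)) A
| T_inj1 Γ v A B : typ st Γ (EV v) A -> typ st Γ (EV (VInj S1 v)) (TPlus A B)
| T_inj2 Γ v A B : typ st Γ (EV v) B -> typ st Γ (EV (VInj S2 v)) (TPlus A B)
| T_dsum_p Γ Δ Γ' v x t y u A B C :
    pol_of C = Pos ->
    typ st Δ (EV v) (TPlus A B) ->
    typ st (Γ ++ (x, A) :: Γ') t C -> typ st (Γ ++ (y, B) :: Γ') u C ->
    ctx_ok (Γ ++ Δ ++ Γ') ->
    typ st (Γ ++ Δ ++ Γ') (EDSum v x t y u) C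
| T_dsum_n Γ Δ Γ' v x w y w' A B C :
    pol_of C = Neg ->
    typ st Δ (EV v) (TPlus A B) ->
    typ st (Γ ++ (x, A) :: Γ') (EV w) C -> typ st (Γ ++ (y, B) :: Γ') (EV w') C ->
    ctx_ok (Γ ++ Δ ++ Γ') ->
    typ st (Γ ++ Δ ++ Γ') (EV (VDSum v x w y w')) C
| T_lam Γ x t A B :
    typ st ((x, A) :: Γ) t B -> typ st Γ (EV (VLam x t)) (TLolli A B)
| T_app_p Γ Δ v w A B :
    pol_of B = Pos ->
    typ st Γ (EV w) A -> typ st Δ (EV v) (TLolli A B) -> ctx_ok (Γ ++ Δ) ->
    typ st (Γ ++ Δ) (EApp v w) B
| T_app_n Γ Δ v w A B :
    pol_of B = Neg ->
    typ st Γ (EV w) A -> typ st Δ (EV v) (TLolli A B) -> ctx_ok (Γ ++ Δ) ->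
    typ st (Γ ++ Δ) (EV (VApp v w)) B
| T_with Γ t u A B :
    typ st Γ t A -> typ st Γ u B -> typ st Γ (EV (VWith t u)) (TWith A B)
| T_proj_p Γ i v A1 A2 :
    pol_of (pick i A1 A2) = Pos ->
    typ st Γ (EV v) (TWith A1 A2) -> typ st Γ (EProj i v) (pick i A1 A2)
| T_proj_n Γ i v A1 A2 :
    pol_of (pick i A1 A2) = Neg ->
    typ st Γ (EV v) (TWith A1 A2) -> typ st Γ (EV (VProj i v)) (pick i A1 A2).

Inductive stack : Type :=
| SNil : stack
| SArg : value -> pol -> stack -> stack
| SProj : side -> pol -> stack -> stack
| SBind : var -> expr -> pol -> stack -> stack.

(** resource lists l ::= [] | r_n :: l, r_n represented by n *)
Definition rlist := list nat.

Record cmd : Type := Cmd { c_term : expr; c_stack : stack; c_list : rlist; c_pol : pol }.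

Inductive styp (st : bool) : stack -> ty -> ty -> Prop :=
| S_nil A : styp st SNil A A
| S_arg v e s A B C :
    styp st s B C -> e = pol_of B -> typ st [] (EV v) A ->
    styp st (SArg v e s) (TLolli A B) C
| S_bind x t e s A B C :
    styp st s B C -> e = pol_of B ->
    pol_of A = Pos ->
    typ st [(x, A)] t B ->
    styp st (SBind x t e s) A C
| S_proj i e s A1 A2 C :
    styp st s (pick i A1 A2) C -> e = pol_of (pick i A1 A2) ->
    styp st (SProj i e s) (TWith A1 A2) C.

Definition cmd_typed (st : bool) (c : cmd) (A : ty) : Prop :=
  exists B, pol_of B = c_pol c /\ typ st [] (c_term c) B /\ styp st (c_stack c) B A.

Inductive red : cmd -> cmd -> Prop :=
| R_letN_p x v u s l :
    red (Cmd (ELetN x v u) s l Pos) (Cmd (subst_e [(x, v)] u) s l Pos)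
| R_letN_n x v w s l :
    red (Cmd (EV (VLetN x v w)) s l Neg) (Cmd (EV (subst_v [(x, v)] w)) s l Neg)
| R_letP_p x t u s l :
    red (Cmd (ELetP x t u) s l Pos) (Cmd t (SBind x u Pos s) l Pos)
| R_letP_n x t w s l :
    red (Cmd (EV (VLetP x t w)) s l Neg) (Cmd t (SBind x (EV w) Neg s) l Pos)
| R_bind v x t e s l :
    red (Cmd (EV v) (SBind x t e s) l Pos) (Cmd (subst_e [(x, v)] t) s l e)
| R_app_p v w s l :
    red (Cmd (EApp v w) s l Pos) (Cmd (EV v) (SArg w Pos s) l Neg)
| R_app_n v w s l :
    red (Cmd (EV (VApp v w)) s l Neg) (Cmd (EV v) (SArg w Neg s) l Neg)
| R_lam x t v e s l :
    red (Cmd (EV (VLam x t)) (SArg v e s) l Neg) (Cmd (subst_e [(x, v)] t) s l e)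
| R_proj_p i v s l :
    red (Cmd (EProj i v) s l Pos) (Cmd (EV v) (SProj i Pos s) l Neg)
| R_proj_n i v s l :
    red (Cmd (EV (VProj i v)) s l Neg) (Cmd (EV v) (SProj i Neg s) l Neg)
| R_with i t1 t2 e s l :
    red (Cmd (EV (VWith t1 t2)) (SProj i e s) l Neg) (Cmd (pick i t1 t2) s l e)
| R_dtens_p v w x y t s l :
    red (Cmd (EDTens (VPair v w) x y t) s l Pos)
        (Cmd (subst_e [(x, v); (y, w)] t) s l Pos)
| R_dtens_n v w x y w' s l :
    red (Cmd (EV (VDTens (VPair v w) x y w')) s l Neg)
        (Cmd (EV (subst_v [(x, v); (y, w)] w')) s l Neg)
| R_dunit_p t s l :
    red (Cmd (EDUnit VUnit t) s l Pos) (Cmd t s l Pos)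
| R_dunit_n w s l :
    red (Cmd (EV (VDUnit VUnit w)) s l Neg) (Cmd (EV w) s l Neg)
| R_dsum_p i v x1 t1 x2 t2 s l :
    red (Cmd (EDSum (VInj i v) x1 t1 x2 t2) s l Pos)
        (Cmd (subst_e [(pick i x1 x2, v)] (pick i t1 t2)) s l Pos)
| R_dsum_n i v x1 w1 x2 w2 s l :
    red (Cmd (EV (VDSum (VInj i v) x1 w1 x2 w2)) s l Neg)
        (Cmd (EV (subst_v [(pick i x1 x2, v)] (pick i w1 w2))) s l Neg)
| R_new_some e s n l :
    red (Cmd (EV VNew) (SArg VUnit e s) (n :: l) Neg)
        (Cmd (EV (VInj S1 (VRes n))) s l Pos)
| R_new_none e s :
    red (Cmd (EV VNew) (SArg VUnit e s) [] Neg)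
        (Cmd (EV (VInj S2 VUnit)) s [] Pos)
| R_delete n e s l :
    red (Cmd (EV VDelete) (SArg (VRes n) e s) l Neg)
        (Cmd (EV VUnit) s (n :: l) Pos).

Definition final_cmd (c : cmd) : Prop :=
  exists v l e, is_final_value v /\ c = Cmd (EV v) SNil l e.

From Stdlib Require Import List Permutation.
Import ListNotations.

(* A closed well-typed term has a rigid syntactic shape: it is not a
   variable, an eliminator at its head is applied to an introduction form
   (canonical forms), and its annotation agrees with the polarity of its
   type.  Such a term either is a final value or is the head of a redex for
   every stack; a final value facing a well-typed non-empty stack meets an
   argument, projection or binder it can consume.  The shape is invariant
   under renaming, which is all that (struct) does, so the argument is the
   same with or without that rule. *)

Definition closed_shape_v (v : value) (B : ty) : Prop :=
  match v with
  | VLetP _ _ _ | VLetN _ _ _ | VApp _ _ | VProj _ _ => pol_of B = Neg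
  | VDTens v' _ _ _ => pol_of B = Neg /\ exists a b, v' = VPair a b
  | VDUnit v' _ => pol_of B = Neg /\ v' = VUnit
  | VDSum v' _ _ _ _ => pol_of B = Neg /\ exists i a, v' = VInj i a
  | VVar _ => False
  | VNew => exists C, B = TLolli TOne C
  | VDelete => exists C, B = TLolli TR C
  | VPair _ _ => exists A C, B = TTensor A C
  | VUnit => B = TOne
  | VInj _ _ => exists A C, B = TPlus A C
  | VLam _ _ => exists A C, B = TLolli A C
  | VWith _ _ => exists A C, B = TWith A C
  | VRes _ => B = TR
  end.

Definition closed_shape (t : expr) (B : ty) : Prop :=
  match t with
  | EV v => closed_shape_v v B
  | ELetP _ _ _ | ELetN _ _ _ | EApp _ _ | EProj _ _ => pol_of B = Pos
  | EDTens v _ _ _ => pol_of B = Pos /\ exists a b, v = VPair a b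
  | EDUnit v _ => pol_of B = Pos /\ v = VUnit
  | EDSum v _ _ _ _ => pol_of B = Pos /\ exists i a, v = VInj i a
  end.

Lemma closed_shape_rename ρ t B :
  closed_shape t B -> closed_shape (rename_e ρ t) B.
Proof.
  destruct t as [v | | | | | | |]; [destruct v |..]; cbn; auto;
    intros [HB Hv]; split; trivial;
    (destruct Hv as (? & ? & ->) || subst); cbn; eauto.
Qed.

Ltac closed_shape_inv :=
  match goal with v : value |- _ => destruct v end; cbn;
  intros H; decompose record H; try discriminate; try contradiction; eauto.

Lemma closed_shape_tensor v A B :
  closed_shape_v v (TTensor A B) -> exists a b, v = VPair a b.
Proof. closed_shape_inv. Qed.

Lemma closed_shape_one v : closed_shape_v v TOne -> v = VUnit.
Proof. closed_shape_inv. Qed.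

Lemma closed_shape_plus v A B :
  closed_shape_v v (TPlus A B) -> exists i a, v = VInj i a.
Proof. closed_shape_inv. Qed.

Lemma closed_shape_res v : closed_shape_v v TR -> exists n, v = VRes n.
Proof. closed_shape_inv. Qed.

Lemma typ_closed_shape st t B : typ st [] t B -> closed_shape t B.
Proof.
  remember [] as Γ eqn:HΓ; intros Ht; induction Ht; subst; cbn;
    repeat match goal with H : _ ++ _ = [] |- _ => apply app_eq_nil in H as [? ?] end;
    subst; try discriminate; eauto.
  { apply closed_shape_rename, IHHt.
    match goal with Hperm : Permutation _ [] |- _ =>
      apply Permutation_sym, Permutation_nil, map_eq_nil in Hperm; exact Hperm end. }
  all: split; [assumption |].
  all: match goal with IH : [] = [] -> closed_shape (EV _) _ |- _ =>
         specialize (IH eq_refl); cbn in IH end.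
  all: eauto using closed_shape_tensor, closed_shape_one, closed_shape_plus.
Qed.

Lemma red_not_final c c' : red c c' -> ~ final_cmd c.
Proof. intros Hred (v & l & e & Hv & ->); inversion Hred; subst; exact Hv. Qed.

Lemma closed_shape_progress t B :
  closed_shape t B ->
  (exists v, t = EV v /\ is_final_value v) \/
  (forall s l, exists c', red (Cmd t s l (pol_of B)) c').
Proof.
  destruct t as [v | | | | | | |]; [destruct v |..]; cbn;
    try (left; eexists; split; [reflexivity | exact I]);
    intros H; try contradiction; right; intros ? ?;
    decompose record H; subst;
    match goal with HB : pol_of B = _ |- _ => rewrite HB end;
    eexists; constructor.
Qed.

Lemma final_value_progress st v s l A B :
  is_final_value v -> closed_shape_v v B -> styp st s B A -> s <> SNil ->
  exists c', red (Cmd (EV v) s l (pol_of B)) c'.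
Proof.
  intros Hv Hshape Hs Hnil.
  destruct Hs as [| ? ? ? ? ? ? _ _ Hw | ? ? ? ? ? ? ? _ _ HA _ | ? ? ? ? ? ? _ _]; cbn.
  - contradiction.
  - apply typ_closed_shape in Hw.
    destruct v; cbn in Hv, Hshape; try contradiction;
      try (decompose record Hshape; discriminate).
    + destruct Hshape as [C' [= -> _]].
      apply closed_shape_one in Hw as ->; destruct l; eexists; constructor.
    + destruct Hshape as [C' [= -> _]].
      destruct (closed_shape_res _ Hw) as [n ->]; eexists; constructor.
    + eexists; constructor.
  - rewrite HA; eexists; constructor.
  - destruct v; cbn in Hv, Hshape; try contradiction;
      try (decompose record Hshape; discriminate).
    eexists; constructor.
Qed.

Theorem theorem3 (st : bool) (c : cmd) (A : ty) :
  cmd_typed st c A -> ((exists c', red c c') <-> ~ final_cmd c).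
Proof.
  intros (B & Hpol & Ht & Hs); split.
  - intros [c' Hred]; exact (red_not_final _ _ Hred).
  - destruct c as [t s l e]; cbn in *; subst e; intros Hnot_final.
    pose proof (typ_closed_shape _ _ _ Ht) as Hshape.
    destruct (closed_shape_progress _ _ Hshape) as [(v & -> & Hv) | Hred];
      [| apply Hred].
    apply (final_value_progress st v s l A B Hv Hshape Hs).
    intros ->; apply Hnot_final; now exists v, l, (pol_of B).
Qed.
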